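(* For $(\eta,\zeta,\tau)\in\mathbb R^3$ with $\tau\ne0$ let $T_1(\eta,\zeta,\tau):=\dfrac{w^3}{\tau^2}+\dfrac{27}{4}$, where $w:=(\eta+i)^2+(\zeta+i)^2$. There exists a compact set $K\subset\mathbb R^3$ such that $|T_1(\eta,\zeta,\tau)|\ge\frac{27}{8}$ for all $(\eta,\zeta,\tau)\in\mathbb R^3\setminus K$ with $\tau\neq0$. *)

From Stdlib Require Import Reals Lra.
Open Scope R_scope.

Definition C := (R * R)%type.
Definition Cre (z : C) : R := fst z.
Definition Cim (z : C) : R := snd z.
Definition RtoC (x : R) : C := (x, 0).
Definition Ci : C := (0, 1).
Definition Cadd (z u : C) : C := (Cre z + Cre u, Cim z + Cim u).
Definition Cmul (z u : C) : C :=
  (Cre z * Cre u - Cim z * Cim u, Cre z * Cim u + Cim z * Cre u).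
Definition Cdivr (z : C) (r : R) : C := (Cre z / r, Cim z / r).
Definition Cmod (z : C) : R := sqrt (Cre z ^ 2 + Cim z ^ 2).

Definition w_fun (eta zeta : R) : C :=
  let a := Cadd (RtoC eta) Ci in
  let b := Cadd (RtoC zeta) Ci in
  Cadd (Cmul a a) (Cmul b b).

Definition T1 (eta zeta tau : R) : C :=
  let w := w_fun eta zeta in
  Cadd (Cdivr (Cmul w (Cmul w w)) (tau ^ 2)) (RtoC (27 / 4)).

Definition R3 := (R * R * R)%type.
Definition norm3 (p : R3) : R :=
  let '(x, y, z) := p in sqrt (x ^ 2 + y ^ 2 + z ^ 2).
Definition dist3 (p q : R3) : R :=
  let '(x1, y1, z1) := p in let '(x2, y2, z2) := q in
  sqrt ((x1 - x2) ^ 2 + (y1 - y2) ^ 2 + (z1 - z2) ^ 2).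

(** Compact subsets of R^3 (Euclidean topology), via Heine–Borel:
    closed (complement open) and bounded. *)
Definition closed3 (K : R3 -> Prop) : Prop :=
  forall p, ~ K p -> exists eps, 0 < eps /\ forall q, dist3 p q < eps -> ~ K q.
Definition bounded3 (K : R3 -> Prop) : Prop :=
  exists M, forall p, K p -> norm3 p <= M.
Definition compact3 (K : R3 -> Prop) : Prop := closed3 K /\ bounded3 K.

(** Writing [w = a + i b] with [a = eta^2 + zeta^2 - 2] and [b = 2 (eta + zeta)],
    one has [Re (w^3) = a (a^2 - 3 b^2)] and [b^2 <= 8 (a + 2)].  Under this
    constraint [Re (w^3)] is nonnegative once [a >= 26] and bounded below by an
    absolute constant in general.  Hence [Re T_1 >= 27/4] as soon as [eta] or
    [zeta] is large, and [Re T_1 >= 27/4 - 2] as soon as [|tau|] is large; the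
    complement of these two regimes is a compact box. *)

From Pilot Require Import Defs.
From Stdlib Require Import Reals Lra Psatz Classical.
Open Scope R_scope.

Lemma Cre_le_Cmod (z : Defs.C) : Cre z <= Cmod z.
Proof.
  unfold Cmod; apply Rle_trans with (Rabs (Cre z)); [apply Rle_abs |].
  rewrite <- sqrt_Rsqr_abs; apply sqrt_le_1_alt; unfold Rsqr; nra.
Qed.

Lemma Cre_cube (z : Defs.C) :
  Cre (Cmul z (Cmul z z)) = Cre z * (Cre z ^ 2 - 3 * Cim z ^ 2).
Proof. unfold Cmul, Cre, Cim; simpl; ring. Qed.

Lemma Cre_w_fun (eta zeta : R) : Cre (w_fun eta zeta) = eta ^ 2 + zeta ^ 2 - 2.
Proof. unfold w_fun, Cadd, Cmul, RtoC, Ci, Cre, Cim; simpl; ring. Qed.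

Lemma Cim_w_fun (eta zeta : R) : Cim (w_fun eta zeta) = 2 * (eta + zeta).
Proof. unfold w_fun, Cadd, Cmul, RtoC, Ci, Cre, Cim; simpl; ring. Qed.

Lemma Cim_w_fun_sqr_le (eta zeta : R) :
  Cim (w_fun eta zeta) ^ 2 <= 8 * (Cre (w_fun eta zeta) + 2).
Proof.
  rewrite Cre_w_fun, Cim_w_fun.
  pose proof (pow2_ge_0 (eta - zeta)); nra.
Qed.

Lemma Cre_T1 (eta zeta tau : R) :
  Cre (T1 eta zeta tau) =
  Cre (Cmul (w_fun eta zeta) (Cmul (w_fun eta zeta) (w_fun eta zeta))) / tau ^ 2
  + 27 / 4.
Proof. reflexivity. Qed.

Section CubicRealPart.

Variables a b : R.
Hypothesis b_sqr_le : b ^ 2 <= 8 * (a + 2).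

Lemma cubic_re_ge0 : 26 <= a -> 0 <= a * (a ^ 2 - 3 * b ^ 2).
Proof. intros; nra. Qed.

Lemma cubic_re_lower_bound : -20000 <= a * (a ^ 2 - 3 * b ^ 2).
Proof.
  pose proof (pow2_ge_0 b) as b_sqr_ge0.
  destruct (Rle_lt_dec 0 a) as [a_ge0 | a_lt0].
  - (* [a^3 - 3 a b^2 >= a^3 - 24 a^2 - 48 a = a (a - 12)^2 - 192 a] *)
    assert (0 <= a * (a - 12) ^ 2) by (apply Rmult_le_pos; [lra | apply pow2_ge_0]).
    destruct (Rle_lt_dec 26 a); [pose proof cubic_re_ge0 | ]; nra.
  - nra.
Qed.

End CubicRealPart.

Lemma Cre_T1_ge_big_space (eta zeta tau : R) :
  tau <> 0 -> 26 <= eta ^ 2 + zeta ^ 2 - 2 -> 27 / 4 <= Cre (T1 eta zeta tau).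
Proof.
  intros tau_neq0 a_ge; rewrite <- Cre_w_fun in a_ge; rewrite Cre_T1, Cre_cube.
  pose proof (cubic_re_ge0 _ _ (Cim_w_fun_sqr_le eta zeta) a_ge) as cubic_ge0.
  assert (tau2_pos : 0 < tau ^ 2)
    by (rewrite <- Rsqr_pow2; apply Rlt_0_sqr, tau_neq0).
  pose proof (Rle_mult_inv_pos _ _ cubic_ge0 tau2_pos); unfold Rdiv; lra.
Qed.

Lemma Cre_T1_ge_big_time (eta zeta tau : R) :
  100 < Rabs tau -> 27 / 4 - 2 <= Cre (T1 eta zeta tau).
Proof.
  intros tau_big; rewrite Cre_T1, Cre_cube.
  pose proof (cubic_re_lower_bound _ _ (Cim_w_fun_sqr_le eta zeta)) as cubic_ge.
  set (w := w_fun eta zeta) in *.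
  assert (tau2_big : 10000 < tau ^ 2).
  { rewrite <- pow2_abs; pose proof (Rabs_pos tau); nra. }
  assert (-2 <= Cre w * (Cre w ^ 2 - 3 * Cim w ^ 2) / tau ^ 2).
  { apply Rmult_le_reg_r with (tau ^ 2); [lra |].
    unfold Rdiv; rewrite Rmult_assoc, Rinv_l by lra; nra. }
  lra.
Qed.

Lemma dist3_coord_le (x1 y1 z1 x2 y2 z2 : R) :
  Rabs (x1 - x2) <= dist3 (x1, y1, z1) (x2, y2, z2) /\
  Rabs (y1 - y2) <= dist3 (x1, y1, z1) (x2, y2, z2) /\
  Rabs (z1 - z2) <= dist3 (x1, y1, z1) (x2, y2, z2).
Proof.
  unfold dist3; pose proof (pow2_ge_0 (x1 - x2));
  pose proof (pow2_ge_0 (y1 - y2)); pose proof (pow2_ge_0 (z1 - z2));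
  repeat split; rewrite <- sqrt_Rsqr_abs; apply sqrt_le_1_alt;
  unfold Rsqr; simpl in *; lra.
Qed.

Lemma closed3_and (A B : R3 -> Prop) :
  closed3 A -> closed3 B -> closed3 (fun p => A p /\ B p).
Proof.
  intros closedA closedB p notAB.
  destruct (classic (A p)) as [Ap | notAp].
  - assert (notBp : ~ B p) by tauto.
    destruct (closedB p notBp) as [eps [eps_pos H]].
    exists eps; split; [exact eps_pos |]; intros q Hq [_ Bq]; exact (H q Hq Bq).
  - destruct (closedA p notAp) as [eps [eps_pos H]].
    exists eps; split; [exact eps_pos |]; intros q Hq [Aq _]; exact (H q Hq Aq).
Qed.

Lemma closed3_sublevel (f : R3 -> R) (c : R) :
  (forall p q, f p - f q <= dist3 p q) -> closed3 (fun p => f p <= c).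
Proof.
  intros f_lip p fp_gt; exists (f p - c); split; [lra |].
  intros q Hq; pose proof (f_lip p q); lra.
Qed.

Definition box3 (r s : R) (p : R3) : Prop :=
  Rabs (fst (fst p)) <= r /\ Rabs (snd (fst p)) <= r /\ Rabs (snd p) <= s.

Lemma box3_closed (r s : R) : closed3 (box3 r s).
Proof.
  assert (Rabs_sub_le : forall u v d, Rabs (u - v) <= d -> Rabs u - Rabs v <= d).
  { intros u v d H; pose proof (Rabs_triang_inv u v); lra. }
  repeat apply closed3_and; apply closed3_sublevel;
    intros [[x1 y1] z1] [[x2 y2] z2]; apply Rabs_sub_le, dist3_coord_le.
Qed.

Lemma box3_bounded (r s : R) : bounded3 (box3 r s).
Proof.
  exists (r + r + s); intros [[x y] z] [Hx [Hy Hz]]; cbn [fst snd] in *; unfold norm3.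
  assert (Hsum : 0 <= Rabs x + Rabs y + Rabs z)
    by (pose proof (Rabs_pos x); pose proof (Rabs_pos y); pose proof (Rabs_pos z); lra).
  apply Rle_trans with (Rabs x + Rabs y + Rabs z); [| lra].
  rewrite <- (sqrt_pow2 _ Hsum); apply sqrt_le_1_alt.
  rewrite <- (pow2_abs x), <- (pow2_abs y), <- (pow2_abs z).
  pose proof (Rabs_pos x); pose proof (Rabs_pos y); pose proof (Rabs_pos z); nra.
Qed.

Lemma box3_compact (r s : R) : compact3 (box3 r s).
Proof. split; [apply box3_closed | apply box3_bounded]. Qed.

Theorem mainTheorem7 :
  exists K : R3 -> Prop, compact3 K /\
    forall eta zeta tau : R, ~ K (eta, zeta, tau) -> tau <> 0 ->
      Cmod (T1 eta zeta tau) >= 27 / 8.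
Proof.
  exists (box3 6 100); split; [apply box3_compact |].
  intros eta zeta tau outside tau_neq0.
  apply Rle_ge, Rle_trans with (Cre (T1 eta zeta tau)); [| apply Cre_le_Cmod].
  destruct (Rle_lt_dec (Rabs tau) 100) as [tau_small | tau_big].
  - assert (space_big : 26 <= eta ^ 2 + zeta ^ 2 - 2).
    { destruct (Rle_lt_dec 26 (eta ^ 2 + zeta ^ 2 - 2)) as [| a_lt]; [assumption |].
      exfalso; apply outside; repeat split; cbn [fst snd]; [| | exact tau_small];
        pose proof (pow2_ge_0 eta); pose proof (pow2_ge_0 zeta);
        apply Rabs_le; split; nra. }
    pose proof (Cre_T1_ge_big_space eta zeta tau tau_neq0 space_big); lra.
  - pose proof (Cre_T1_ge_big_time eta zeta tau tau_big); lra.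
Qed.
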